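(* Let $N\ge1$, and let $A_n\to A$ in $M_N(\mathbb{C})$. Then $\liminf_{n\to\infty}\psi(A_n)\ge\psi(A)$.
   Context: $M_N(\mathbb{C})$ denotes the algebra of complex $N\times N$ matrices acting on $\mathbb{C}^N$ with the Euclidean inner product, equipped with the operator norm. For $A\in M_N(\mathbb{C})$, the numerical range is $W(A):=\{\langle Ax,x\rangle: x\in\mathbb{C}^N,\ \|x\|=1\}$. The Crouzeix ratio of $A$ is $\psi(A):=\sup\{\|p(A)\|: p \text{ a polynomial with } |p|\le 1 \text{ on } W(A)\}$. *)

From HB Require Import structures.
From mathcomp Require Import all_boot all_order all_algebra.
From mathcomp Require Import all_classical all_reals all_analysis.
From mathcomp Require Import complex.
Set Implicit Arguments. Unset Strict Implicit. Unset Printing Implicit Defensive.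
Import Order.TTheory GRing.Theory Num.Theory.
Local Open Scope ring_scope.
Local Open Scope classical_set_scope.

Section Crouzeix.
Variable R : realType.
Local Notation C := (complex R).

Definition cmod (z : C) : R := ComplexField.Normc.normc z.

Definition cinner N (x y : 'cV[C]_N) : C := \sum_(i < N) x i ord0 * (y i ord0)^*.

Definition vnorm N (x : 'cV[C]_N) : R := Num.sqrt (\sum_(i < N) cmod (x i ord0) ^+ 2).

Definition opnorm N (M : 'M[C]_N) : \bar R :=
  ereal_sup [set ((vnorm (M *m x))%:E) | x in [set x : 'cV[C]_N | vnorm x = 1]].

Definition numrange N (A : 'M[C]_N) : set C :=
  [set cinner (A *m x) x | x in [set x : 'cV[C]_N | vnorm x = 1]].

Definition peval_mx N (p : {poly C}) (A : 'M[C]_N) : 'M[C]_N :=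
  \sum_(i < size p) p`_i *: A ^+ i.

Definition crouzeix_ratio N (A : 'M[C]_N) : \bar R :=
  ereal_sup [set opnorm (peval_mx p A) |
               p in [set p : {poly C} | forall z, numrange A z -> cmod p.[z] <= 1]].
End Crouzeix.

(* psi(A) is the supremum of |p(A)x| over unit vectors x and polynomials p with
   |p| <= 1 on W(A), so it suffices to bound each such |p(A)x| by the liminf.
   Every point <A_n y, y> of W(A_n) lies within d_n := |A_n - A| of the point
   <A y, y> of W(A), and p is Lipschitz on bounded sets, so |p| <= 1 + L d_n on
   W(A_n).  Hence p / (1 + L d_n) is admissible for A_n, which gives
   psi(A_n) >= |p(A_n)x| / (1 + L d_n), and the right-hand side tends to
   |p(A)x|.  All estimates use the entrywise l1 norm of matrices, which is
   submultiplicative and dominated by a multiple of the operator norm. *)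

From HB Require Import structures.
From mathcomp Require Import all_boot all_order all_algebra.
From mathcomp Require Import all_classical all_reals all_analysis.
From mathcomp Require Import complex.
From mathcomp Require Import ring lra.
Import Order.TTheory GRing.Theory Num.Theory numFieldNormedType.Exports.
Local Open Scope ring_scope.
Local Open Scope classical_set_scope.
Set Implicit Arguments. Unset Strict Implicit.

Section SubadditiveSum.
Variables (R : realType) (V : nmodType) (nu : V -> R).
Hypotheses (nu0 : nu 0 = 0) (nuD : forall a b, nu (a + b) <= nu a + nu b).

Lemma le_sum_subadditive I (r : seq I) (P : pred I) (F : I -> V) :
  nu (\sum_(i <- r | P i) F i) <= \sum_(i <- r | P i) nu (F i).
Proof.
elim/big_rec2: _ => [|i y1 y2 _ IH]; first by rewrite nu0.
by apply: le_trans (nuD _ _) _; rewrite lerD2l.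
Qed.

End SubadditiveSum.

Lemma limn_einf_le_near (R : realType) (u v : (\bar R)^nat) :
  (\forall k \near \oo, u k <= v k)%E -> (limn_einf u <= limn_einf v)%E.
Proof.
move=> [N _ uv]; rewrite !limn_einf_lim.
apply: lee_lim; [exact: is_cvg_einfs | exact: is_cvg_einfs |].
near=> m; apply: le_ereal_inf_tmp => _ [k /= mk <-].
apply: ge_ereal_inf; exists (u k); first by exists k.
by apply: uv; rewrite /= (leq_trans _ mk) //; near: m; exists N.
Unshelve. all: by end_near.
Qed.

Lemma cvg_le_limn_einf (R : realType) (u : (\bar R)^nat) (g : nat -> R) (l : R) :
  (\forall k \near \oo, (g k)%:E <= u k)%E -> g @ \oo --> l -> (l%:E <= limn_einf u)%E.
Proof.
move=> gu gl; have Egl : (fun k => (g k)%:E) @ \oo --> l%:E.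
  by apply: cvg_EFin; [exact: nearW | exact: gl].
by rewrite -(cvg_limn_einf_sup Egl).1; exact: limn_einf_le_near.
Qed.

Lemma cvg_perturbed_ratio (R : realType) (v a l : R) (d : nat -> R) : d @ \oo --> 0 ->
  (v - Num.sqrt (a * d k)) / (1 + l * d k) @[k --> \oo] --> v.
Proof.
move=> d0.
have sqrt_cvg : Num.sqrt (a * d k) @[k --> \oo] --> 0.
  rewrite -sqrtr0 -(mulr0 a).
  by apply: continuous_cvg; [exact: sqrt_continuous | exact: cvgMl_tmp].
have den_cvg : (1 + l * d k)^-1 @[k --> \oo] --> (1 + l * 0)^-1.
  apply: cvgV; first by rewrite mulr0 addr0 oner_neq0.
  by apply: cvgD; [exact: cvg_cst | exact: cvgMl_tmp].
rewrite mulr0 addr0 invr1 in den_cvg.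
have := cvgM (cvgB (cvg_cst v) sqrt_cvg) den_cvg.
by rewrite subr0 mulr1; apply.
Qed.

Section Crouzeix.
Variable R : realType.
Local Notation C := (complex R).

Lemma cmodE (z : C) : `|z| = (cmod z)%:C%C. Proof. by []. Qed.

Lemma cmod_ge0 (z : C) : 0 <= cmod z.
Proof. by case: z => a b; exact: sqrtr_ge0. Qed.

Lemma cmodD (a b : C) : cmod (a + b) <= cmod a + cmod b.
Proof. exact: le_normcD. Qed.

Lemma cmodM (a b : C) : cmod (a * b) = cmod a * cmod b.
Proof. exact: ComplexField.Normc.normcM. Qed.

Lemma cmodN (a : C) : cmod (- a) = cmod a.
Proof. exact: normcN. Qed.

Lemma cmod0 : cmod (0 : C) = 0.
Proof. exact: ComplexField.Normc.normc0. Qed.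

Lemma cmod1 : cmod (1 : C) = 1.
Proof. exact: ComplexField.Normc.normc1. Qed.

Lemma cmodJ (a : C) : cmod a^* = cmod a.
Proof. by apply: complexI; rewrite -!cmodE norm_conjC. Qed.

Lemma cmodR (r : R) : cmod r%:C%C = `|r|.
Proof. by apply: complexI; rewrite -cmodE normc_def /= expr0n /= addr0 sqrtr_sqr. Qed.

Lemma cmod_sum I (r : seq I) (P : pred I) (F : I -> C) :
  cmod (\sum_(i <- r | P i) F i) <= \sum_(i <- r | P i) cmod (F i).
Proof. by apply: le_sum_subadditive; [exact: cmod0 | exact: cmodD]. Qed.

Definition poly_lipschitz (p : {poly C}) (K : R) : R :=
  \sum_(i < size p) cmod p`_i * (i%:R * K ^+ i).

Lemma poly_lipschitz_ge0 p K : 0 <= K -> 0 <= poly_lipschitz p K.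
Proof. by move=> K0; apply: sumr_ge0 => i _; rewrite !mulr_ge0 ?cmod_ge0 ?exprn_ge0. Qed.

Section SubmultiplicativeSeminorm.
Variables (T : lalgType C) (nu : T -> R) (c : R).
Hypotheses (nu_ge0 : forall a, 0 <= nu a)
  (nuD : forall a b, nu (a + b) <= nu a + nu b)
  (nuM : forall a b, nu (a * b) <= nu a * nu b)
  (nuZ : forall k a, nu (k *: a) = cmod k * nu a)
  (nu1 : nu 1 <= c).

Definition peval (p : {poly C}) (a : T) : T := \sum_(i < size p) p`_i *: a ^+ i.

Lemma nu0 : nu 0 = 0.
Proof. by rewrite -(scale0r 0) nuZ cmod0 mul0r. Qed.

Lemma nu_exp a K i : nu a <= K -> nu (a ^+ i) <= c * K ^+ i.
Proof.
move=> aK; elim: i => [|i IH]; first by rewrite expr0 expr0 mulr1.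
rewrite exprS (exprS K) mulrCA; apply: le_trans (nuM _ _) _.
exact: ler_pM.
Qed.

Lemma nu_expB a b K i : 1 <= K -> nu a <= K -> nu b <= K ->
  nu (a ^+ i - b ^+ i) <= i%:R * c * K ^+ i * nu (a - b).
Proof.
move=> K1 aK bK; elim: i => [|i IH]; first by rewrite subrr nu0 !mul0r.
have -> : a ^+ i.+1 - b ^+ i.+1 = a * (a ^+ i - b ^+ i) + (a - b) * b ^+ i.
  by rewrite !exprS mulrBr mulrBl addrA subrK.
apply: le_trans (nuD _ _) _; apply: le_trans (lerD (nuM _ _) (nuM _ _)) _.
have c0 : 0 <= c := le_trans (nu_ge0 1) nu1.
have cKd0 : 0 <= c * K ^+ i * nu (a - b).
  by rewrite !mulr_ge0 // exprn_ge0 // (le_trans _ K1).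
have head := ler_pM (nu_ge0 _) (nu_ge0 _) aK IH.
have tail := ler_pM (nu_ge0 _) (nu_ge0 _) (lexx (nu (a - b))) (nu_exp i bK).
have tailK : c * K ^+ i * nu (a - b) <= c * K ^+ i * nu (a - b) * K by rewrite ler_peMr.
apply: le_trans (lerD head tail) _; rewrite exprS -natr1.
nra.
Qed.

Lemma nu_pevalB p a b K : 1 <= K -> nu a <= K -> nu b <= K ->
  nu (peval p a - peval p b) <= c * poly_lipschitz p K * nu (a - b).
Proof.
move=> K1 aK bK; rewrite -sumrB /poly_lipschitz mulr_sumr mulr_suml.
apply: le_trans (le_sum_subadditive nu0 nuD _ _ _) _; apply: ler_sum => i _.
rewrite -scalerBr nuZ.
have := ler_wpM2l (cmod_ge0 p`_i) (nu_expB i K1 aK bK).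
by congr (_ <= _); ring.
Qed.

End SubmultiplicativeSeminorm.

Lemma cmod_hornerB (p : {poly C}) (z w : C) (K : R) : 1 <= K -> cmod z <= K -> cmod w <= K ->
  cmod (p.[z] - p.[w]) <= poly_lipschitz p K * cmod (z - w).
Proof.
move=> K1 zK wK; rewrite !horner_coef -[poly_lipschitz p K]mul1r.
apply: (@nu_pevalB C^o (@cmod R)) => //.
- exact: cmod_ge0.
- exact: cmodD.
- by move=> a b; rewrite cmodM.
- exact: cmodM.
- by rewrite cmod1.
Qed.

Definition l1norm m n (M : 'M[C]_(m, n)) : R := \sum_i \sum_j cmod (M i j).

Lemma l1norm_ge0 m n (M : 'M[C]_(m, n)) : 0 <= l1norm M.
Proof. by apply: sumr_ge0 => i _; apply: sumr_ge0 => j _; exact: cmod_ge0. Qed.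

Lemma l1norm_row m n (M : 'M[C]_(m, n)) i : \sum_j cmod (M i j) <= l1norm M.
Proof.
rewrite /l1norm (bigD1 i) //= lerDl.
by apply: sumr_ge0 => k _; apply: sumr_ge0 => j _; exact: cmod_ge0.
Qed.

Lemma l1normD m n (M P : 'M[C]_(m, n)) : l1norm (M + P) <= l1norm M + l1norm P.
Proof.
rewrite /l1norm -big_split /=; apply: ler_sum => i _; rewrite -big_split /=.
by apply: ler_sum => j _; rewrite mxE; exact: cmodD.
Qed.

Lemma l1normZ m n (k : C) (M : 'M[C]_(m, n)) : l1norm (k *: M) = cmod k * l1norm M.
Proof.
rewrite /l1norm mulr_sumr; apply: eq_bigr => i _; rewrite mulr_sumr.
by apply: eq_bigr => j _; rewrite mxE cmodM.
Qed.

Lemma l1normM m n p (M : 'M[C]_(m, n)) (P : 'M[C]_(n, p)) :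
  l1norm (M *m P) <= l1norm M * l1norm P.
Proof.
rewrite /l1norm mulr_suml; apply: ler_sum => i _.
apply: (@le_trans _ _ (\sum_j \sum_k cmod (M i k) * cmod (P k j))).
  apply: ler_sum => j _; rewrite mxE; apply: le_trans (cmod_sum _ _ _) _.
  by apply: ler_sum => k _; rewrite cmodM.
rewrite exchange_big /= mulr_suml; apply: ler_sum => k _.
by rewrite -mulr_sumr ler_wpM2l ?cmod_ge0 ?l1norm_row.
Qed.

Lemma l1norm1 n : l1norm (1%:M : 'M[C]_n) = n%:R.
Proof.
rewrite /l1norm -[n in RHS]card_ord -sumr_const; apply: eq_bigr => i _.
rewrite (bigD1 i) //= big1 ?addr0; first by rewrite mxE eqxx cmod1.
by move=> j ji; rewrite mxE eq_sym (negbTE ji) cmod0.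
Qed.

Lemma cmod_mulmx_le_row m n (M : 'M[C]_(m, n)) (x : 'cV[C]_n) i :
  (forall k, cmod (x k 0) <= 1) -> cmod ((M *m x) i 0) <= \sum_j cmod (M i j).
Proof.
move=> x1; rewrite mxE; apply: le_trans (cmod_sum _ _ _) _; apply: ler_sum => k _.
by rewrite cmodM ler_piMr ?cmod_ge0.
Qed.

Lemma l1norm_pevalB n (p : {poly C}) (A B : 'M[C]_n.+1) (K : R) :
  1 <= K -> l1norm A <= K -> l1norm B <= K ->
  l1norm (peval_mx p A - peval_mx p B) <= n.+1%:R * poly_lipschitz p K * l1norm (A - B).
Proof.
apply: (@nu_pevalB _ (@l1norm n.+1 n.+1)) => //.
- exact: l1norm_ge0.
- exact: l1normD.
- exact: l1normM.
- exact: l1normZ.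
- by rewrite l1norm1.
Qed.

Lemma vnorm_ge0 n (x : 'cV[C]_n) : 0 <= vnorm x.
Proof. exact: sqrtr_ge0. Qed.

Lemma sqr_vnorm n (x : 'cV[C]_n) : vnorm x ^+ 2 = \sum_i cmod (x i 0) ^+ 2.
Proof. by rewrite sqr_sqrtr // sumr_ge0 // => i _; rewrite sqr_ge0. Qed.

Lemma cmod_entry_le_vnorm n (x : 'cV[C]_n) i : cmod (x i 0) <= vnorm x.
Proof.
rewrite -(ler_pXn2r (isT : 0 < 2)%N) ?nnegrE ?cmod_ge0 ?vnorm_ge0 // sqr_vnorm.
by rewrite (bigD1 i) //= lerDl sumr_ge0 // => k _; rewrite sqr_ge0.
Qed.

Lemma vnormZ n (k : C) (x : 'cV[C]_n) : vnorm (k *: x) = cmod k * vnorm x.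
Proof.
rewrite /vnorm -[cmod k]ger0_norm ?cmod_ge0 // -sqrtr_sqr -sqrtrM ?sqr_ge0 //.
by rewrite mulr_sumr; congr Num.sqrt; apply: eq_bigr => i _; rewrite mxE cmodM exprMn.
Qed.

Lemma vnorm_delta n (j : 'I_n) : vnorm (delta_mx j 0 : 'cV[C]_n) = 1.
Proof.
rewrite /vnorm (bigD1 j) //= big1 ?addr0; first by rewrite mxE !eqxx cmod1 expr1n sqrtr1.
by move=> k kj; rewrite mxE (negbTE kj) cmod0 expr0n.
Qed.

Lemma unit_vector_entry_le1 n (x : 'cV[C]_n) k : vnorm x = 1 -> cmod (x k 0) <= 1.
Proof. by move=> <-; exact: cmod_entry_le_vnorm. Qed.

Lemma sqr_le_sub_sqrt (a u s : R) : 0 <= a -> 0 <= u -> 0 <= s ->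
  a ^+ 2 - s <= u ^+ 2 -> a - Num.sqrt s <= u.
Proof.
move=> a0 u0 s0 le_sq; have r0 := sqrtr_ge0 s; have rs := sqr_sqrtr s0.
have [ar|ra] := leP a (Num.sqrt s); first by lra.
rewrite -(ler_pXn2r (isT : 0 < 2)%N) ?nnegrE ?subr_ge0 ?(ltW ra) //; nra.
Qed.

(* Avoids the triangle inequality for the Euclidean norm: entrywise,
   |v_i|^2 - 2 d b <= |u_i|^2. *)
Lemma vnorm_ge_perturb n (u v : 'cV[C]_n) (d b : R) : 0 <= d -> 0 <= b ->
  (forall i, cmod (u i 0 - v i 0) <= d) -> (forall i, cmod (v i 0) <= b) ->
  vnorm v - Num.sqrt (2 * n%:R * d * b) <= vnorm u.
Proof.
move=> d0 b0 uv vb; apply: sqr_le_sub_sqrt; rewrite ?vnorm_ge0 ?mulr_ge0 //.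
have entry i : cmod (v i 0) ^+ 2 - 2 * d * b <= cmod (u i 0) ^+ 2.
  have := cmodD (v i 0 - u i 0) (u i 0); rewrite subrK -[v i 0 - u i 0]opprB cmodN.
  have := uv i; have := vb i; have := cmod_ge0 (u i 0); have := cmod_ge0 (v i 0).
  move: (cmod (u i 0)) (cmod (v i 0)) (cmod (u i 0 - v i 0)) => a y e a0 y0 yb ed ya.
  have [yd|dy] := leP y d; nra.
rewrite !sqr_vnorm; apply: le_trans (ler_sum _ (fun i _ => entry i)).
by rewrite sumrB sumr_const card_ord -mulr_natr; lra.
Qed.

Lemma vnorm_le_opnorm n (M : 'M[C]_n) (x : 'cV[C]_n) : vnorm x = 1 ->
  ((vnorm (M *m x))%:E <= opnorm M)%E.
Proof. by move=> x1; apply: ereal_sup_ubound; exists x. Qed.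

Lemma cmod_entry_le_opnorm n (M : 'M[C]_n) i j : ((cmod (M i j))%:E <= opnorm M)%E.
Proof.
apply: le_trans (vnorm_le_opnorm M (vnorm_delta j)).
by rewrite lee_fin -colE; have := cmod_entry_le_vnorm (col j M) i; rewrite mxE.
Qed.

Lemma l1norm_le_opnorm n (M : 'M[C]_n) (r : R) :
  (opnorm M <= r%:E)%E -> l1norm M <= (n * n)%:R * r.
Proof.
move=> Mr; apply: (@le_trans _ _ (\sum_(i < n) \sum_(j < n) r)).
  apply: ler_sum => i _; apply: ler_sum => j _; rewrite -lee_fin.
  exact: le_trans (cmod_entry_le_opnorm M i j) Mr.
by rewrite !sumr_const card_ord -mulrnA mulr_natl.
Qed.

Lemma cvg_l1norm_opnorm n (M_ : nat -> 'M[C]_n) :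
  (fun k => opnorm (M_ k)) @ \oo --> 0%E -> (fun k => l1norm (M_ k)) @ \oo --> 0.
Proof.
move=> /fine_cvgP[M_fin M_cvg].
have opnorm_cvg : (n * n)%:R * fine (opnorm (M_ k)) @[k --> \oo] --> 0.
  by rewrite -(mulr0 (n * n)%:R); exact: cvgMl_tmp.
have bounds : \forall k \near \oo,
    0 <= l1norm (M_ k) <= (n * n)%:R * fine (opnorm (M_ k)).
  near=> k; rewrite l1norm_ge0 /=; apply: l1norm_le_opnorm.
  by rewrite fineK //; near: k.
exact: (squeeze_cvgr bounds (cvg_cst (0 : R^o)) opnorm_cvg).
Unshelve. all: by end_near.
Qed.

Lemma cmod_cinner_le_l1norm n (M : 'M[C]_n) (x : 'cV[C]_n) : vnorm x = 1 ->
  cmod (cinner (M *m x) x) <= l1norm M.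
Proof.
move=> x1; have x_le1 k := unit_vector_entry_le1 k x1.
apply: le_trans (cmod_sum _ _ _) _; apply: ler_sum => i _.
rewrite cmodM cmodJ; apply: le_trans (cmod_mulmx_le_row M i x_le1).
by rewrite ler_piMr ?cmod_ge0.
Qed.

Lemma numrange_perturb n (A B : 'M[C]_n) z : numrange B z ->
  exists2 w, numrange A w & cmod (z - w) <= l1norm (B - A).
Proof.
move=> [x x1 <-]; exists (cinner (A *m x) x); first by exists x.
have -> : cinner (B *m x) x - cinner (A *m x) x = cinner ((B - A) *m x) x.
  by rewrite /cinner -sumrB; apply: eq_bigr => i _; rewrite mulmxBl !mxE mulrBl.
exact: cmod_cinner_le_l1norm.
Qed.

Lemma poly_numrange_perturb n (p : {poly C}) (A B : 'M[C]_n) (K : R) :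
  1 <= K -> l1norm A <= K -> l1norm B <= K ->
  (forall w, numrange A w -> cmod p.[w] <= 1) ->
  forall z, numrange B z -> cmod p.[z] <= 1 + poly_lipschitz p K * l1norm (B - A).
Proof.
move=> K1 AK BK p_adm z Bz; have [w Aw zw] := numrange_perturb A Bz.
have [x x1 Ex] := Bz; have [y y1 Ey] := Aw.
have zK : cmod z <= K by rewrite -Ex; exact: le_trans (cmod_cinner_le_l1norm B x1) BK.
have wK : cmod w <= K by rewrite -Ey; exact: le_trans (cmod_cinner_le_l1norm A y1) AK.
rewrite -(subrK p.[w] p.[z]); apply: le_trans (cmodD _ _) _; rewrite addrC.
apply: lerD; first exact: p_adm.
apply: le_trans (cmod_hornerB p K1 zK wK) _.
by rewrite ler_wpM2l // poly_lipschitz_ge0 // (le_trans _ K1).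
Qed.

Lemma peval_mxZ n (k : C) (p : {poly C}) (M : 'M[C]_n) : k != 0 ->
  peval_mx (k *: p) M = k *: peval_mx p M.
Proof.
move=> k0; rewrite /peval_mx size_scale // scaler_sumr; apply: eq_bigr => i _.
by rewrite coefZ scalerA.
Qed.

Lemma crouzeix_ratio_ge n (p : {poly C}) (B : 'M[C]_n) (x : 'cV[C]_n) (s : R) :
  0 <= s -> (forall z, numrange B z -> cmod p.[z] <= 1 + s) -> vnorm x = 1 ->
  ((vnorm (peval_mx p B *m x) / (1 + s))%:E <= crouzeix_ratio B)%E.
Proof.
move=> s0 p_le x1; set k := (1 + s)^-1.
have k0 : 0 < k by rewrite invr_gt0; lra.
have kC0 : k%:C%C != 0 by rewrite eqE /= negb_and gt_eqF.
have cmod_k : cmod k%:C%C = k by rewrite cmodR gtr0_norm.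
apply: (@le_trans _ _ (opnorm (peval_mx (k%:C%C *: p) B))); last first.
  apply: ereal_sup_ubound; exists (k%:C%C *: p) => // z Bz.
  by rewrite hornerZ cmodM cmod_k mulrC ler_pdivrMr ?mul1r ?p_le //; lra.
apply: le_trans (vnorm_le_opnorm _ x1).
by rewrite peval_mxZ // -scalemxAl vnormZ cmod_k mulrC.
Qed.

Lemma crouzeix_ratio_perturb n (p : {poly C}) (A B : 'M[C]_n.+1) (x : 'cV[C]_n.+1) (K : R) :
  1 <= K -> l1norm A <= K -> l1norm B <= K ->
  (forall w, numrange A w -> cmod p.[w] <= 1) -> vnorm x = 1 ->
  (((vnorm (peval_mx p A *m x)
       - Num.sqrt (2 * n.+1%:R ^+ 2 * poly_lipschitz p K * l1norm (peval_mx p A) * l1norm (B - A)))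
     / (1 + poly_lipschitz p K * l1norm (B - A)))%:E <= crouzeix_ratio B)%E.
Proof.
move=> K1 AK BK p_adm x1; set L := poly_lipschitz p K; set d := l1norm (B - A).
have L0 : 0 <= L by rewrite poly_lipschitz_ge0 // (le_trans _ K1).
have d0 : 0 <= d := l1norm_ge0 _.
have Ld0 : 0 <= L * d by rewrite mulr_ge0.
apply: le_trans (crouzeix_ratio_ge Ld0 (poly_numrange_perturb K1 AK BK p_adm) x1).
rewrite lee_fin ler_wpM2r ?invr_ge0 ?addr_ge0 //.
have -> : 2 * n.+1%:R ^+ 2 * L * l1norm (peval_mx p A) * d
    = 2 * n.+1%:R * (n.+1%:R * L * d) * l1norm (peval_mx p A) by ring.
have x_le1 k := unit_vector_entry_le1 k x1.
apply: vnorm_ge_perturb; rewrite ?mulr_ge0 ?l1norm_ge0 // => i.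
- have -> : (peval_mx p B *m x) i 0 - (peval_mx p A *m x) i 0
      = ((peval_mx p B - peval_mx p A) *m x) i 0 by rewrite mulmxBl !mxE.
  apply: le_trans (cmod_mulmx_le_row _ i x_le1) _; apply: le_trans (l1norm_row _ i) _.
  by rewrite l1norm_pevalB.
- exact: le_trans (cmod_mulmx_le_row _ i x_le1) (l1norm_row _ i).
Qed.
End Crouzeix.

Theorem theorem2p1 (R : realType) (N : nat) (hN : (1 <= N)%N)
    (A_ : nat -> 'M[complex R]_N) (A : 'M[complex R]_N) :
  (fun n => opnorm (A_ n - A)) @ \oo --> 0%E ->
  (crouzeix_ratio A <= limn_einf (fun n => crouzeix_ratio (A_ n)))%E.
Proof.
case: N hN A_ A => // n _ A_ A A_cvg.
apply: ub_ereal_sup => _ [p p_adm <-]; apply: ub_ereal_sup => _ [x x1 <-].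
have d_cvg := cvg_l1norm_opnorm A_cvg.
pose K := l1norm A + 1; pose L := poly_lipschitz p K.
pose a := 2 * n.+1%:R ^+ 2 * L * l1norm (peval_mx p A).
apply: (cvg_le_limn_einf _ (cvg_perturbed_ratio a L d_cvg)).
near=> k; apply: crouzeix_ratio_perturb => //.
- by rewrite lerDr l1norm_ge0.
- by rewrite lerDl.
- rewrite -(subrK A (A_ k)) addrC; apply: le_trans (l1normD _ _) _.
  by rewrite lerD2l; near: k; exact: cvgr_le d_cvg _ ltr01.
Unshelve. all: by end_near.
Qed.
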